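(* Let $\mathcal{A}=(Q,(Q_n,Q_p),T,P)$ be a strongly connected $d$-dimensional VASS MDP, let $\mathbf{x}$ be a maximal solution of constraint system (I) and $(\mathbf{y},\mathbf{z})$ a maximal solution of constraint system (II). Then for every counter $c\in\{1,\dots,d\}$, either $\mathbf{y}(c)>0$ or $\sum_{t\in T}\mathbf{x}(t)\mathbf{u}_t(c)>0$. Moreover, for every transition $t=(p,\mathbf{u},q)\in T$: if $p\in Q_n$ then either $\mathbf{z}(q)-\mathbf{z}(p)+\sum_{i=1}^d\mathbf{u}(i)\mathbf{y}(i)<0$ or $\mathbf{x}(t)>0$; and if $p\in Q_p$ then either $\sum_{t'=(p,\mathbf{u}',q')\in\mathit{Out}(p)}P(t')\big(\mathbf{z}(q')-\mathbf{z}(p)+\sum_{i=1}^d\mathbf{u}'(i)\mathbf{y}(i)\big)<0$ or $\mathbf{x}(t)>0$.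
   Context: A $d$-dimensional VASS MDP is a tuple $\mathcal{A}=(Q,(Q_n,Q_p),T,P)$: $Q$ finite nonempty set of states partitioned into nondeterministic states $Q_n$ and probabilistic states $Q_p$; $T\subseteq Q\times\mathbb{Z}^d\times Q$ a finite set of transitions such that every $p\in Q$ has a nonempty set $\mathit{Out}(p)$ of outgoing transitions $(p,\mathbf{u},q)$; $P$ assigns to each $t\in\mathit{Out}(p)$ with $p\in Q_p$ a positive rational probability, summing to $1$ over $\mathit{Out}(p)$. $\mathit{In}(p)$ is the set of transitions of the form $(q,\mathbf{u},p)$, and $\mathbf{u}_t$ is the update vector of $t$. $\mathcal{A}$ is strongly connected if its underlying directed graph is strongly connected. Constraint system (I): find $\mathbf{x}\in\mathbb{Z}^T$ with $\sum_{t\in T}\mathbf{x}(t)\mathbf{u}_t\ge\vec{0}$ (componentwise), $\mathbf{x}\ge\vec{0}$, $\sum_{t\in\mathit{Out}(p)}\mathbf{x}(t)=\sum_{t\in\mathit{In}(p)}\mathbf{x}(t)$ for every $p\in Q$, and $\mathbf{x}(t)=P(t)\cdot\sum_{t'\in\mathit{Out}(p)}\mathbf{x}(t')$ for every $p\in Q_p$ and $t\in\mathit{Out}(p)$. Its objective inequalities are $\sum_{t\in T}\mathbf{x}(t)\mathbf{u}_t(c)>0$ for each counter $c$ and $\mathbf{x}(t)>0$ for each $t\in T$. Constraint system (II): find $\mathbf{y}\in\mathbb{Z}^d$, $\mathbf{z}\in\mathbb{Z}^Q$ with $\mathbf{y}\ge\vec 0$, $\mathbf{z}\ge\vec 0$,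 $\mathbf{z}(q)-\mathbf{z}(p)+\sum_{i=1}^d\mathbf{u}(i)\mathbf{y}(i)\le 0$ for every $(p,\mathbf{u},q)\in T$ with $p\in Q_n$, and $\sum_{t=(p,\mathbf{u},q)\in\mathit{Out}(p)}P(t)\big(\mathbf{z}(q)-\mathbf{z}(p)+\sum_{i=1}^d\mathbf{u}_t(i)\mathbf{y}(i)\big)\le 0$ for every $p\in Q_p$. Its objective inequalities are $\mathbf{y}(c)>0$ for each counter $c$, $\mathbf{z}(q)-\mathbf{z}(p)+\sum_i\mathbf{u}(i)\mathbf{y}(i)<0$ for each $(p,\mathbf{u},q)\in T$ with $p\in Q_n$, and the strict version of the probabilistic inequality for each $p\in Q_p$. Solutions of each system are closed under addition; a solution is maximal if every objective inequality that is satisfied (strictly) by some solution of the system is satisfied by it. *)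

From HB Require Import structures.
From mathcomp Require Import all_boot all_order all_algebra.
Set Implicit Arguments. Unset Strict Implicit. Unset Printing Implicit Defensive.
Import Order.TTheory GRing.Theory Num.Theory.
Local Open Scope ring_scope.

(* A d-dimensional VASS MDP is given by:
   - a finite type of states Q, with [prob : pred Q] selecting Q_p
     (Q_n = the complement);
   - a finite type of transitions T, each t : T having source [src t],
     target [tgt t] and update vector [u t : 'I_d -> int];
   - probabilities [P : T -> rat] (only meaningful on Out(p), p in Q_p).
   Counters are indexed by 'I_d (i.e. 0..d-1 instead of 1..d). *)

Section VASSMDP.
Variables (d : nat) (Q T : finType) (prob : pred Q) (src tgt : T -> Q)
          (u : T -> 'I_d -> int) (P : T -> rat).

Definition is_vass_mdp : Prop :=
  [/\ (0 < #|Q|)%N,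
      (forall t1 t2, src t1 = src t2 -> tgt t1 = tgt t2 -> u t1 =1 u t2 -> t1 = t2),
      (forall p, exists t, src t = p),
      (forall t, prob (src t) -> 0 < P t) &
      (forall p, prob p -> \sum_(t | src t == p) P t = 1)].

Definition mdp_edge : rel Q := fun p q => [exists t, (src t == p) && (tgt t == q)].
Definition strongly_connected : Prop := forall p q, connect mdp_edge p q.

Definition totaleff (x : T -> int) (c : 'I_d) : int := \sum_t x t * u t c.

Definition solI (x : T -> int) : Prop :=
  [/\ (forall c, 0 <= totaleff x c),
      (forall t, 0 <= x t),
      (forall p, \sum_(t | src t == p) x t = \sum_(t | tgt t == p) x t) &
      (forall t, prob (src t) ->
         (x t)%:~R = P t * (\sum_(t' | src t' == src t) x t')%:~R :> rat)].

Definition maximal_I (x : T -> int) : Prop :=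
  [/\ solI x,
      (forall c, (exists x', solI x' /\ 0 < totaleff x' c) -> 0 < totaleff x c) &
      (forall t, (exists x', solI x' /\ 0 < x' t) -> 0 < x t)].

Definition teff (y : 'I_d -> int) (z : Q -> int) (t : T) : int :=
  z (tgt t) - z (src t) + \sum_i u t i * y i.

Definition peff (y : 'I_d -> int) (z : Q -> int) (p : Q) : rat :=
  \sum_(t | src t == p) P t * (teff y z t)%:~R.

Definition solII (y : 'I_d -> int) (z : Q -> int) : Prop :=
  [/\ (forall c, 0 <= y c),
      (forall q, 0 <= z q),
      (forall t, ~~ prob (src t) -> teff y z t <= 0) &
      (forall p, prob p -> peff y z p <= 0)].

Definition maximal_II (y : 'I_d -> int) (z : Q -> int) : Prop :=
  [/\ solII y z,
      (forall c, (exists y' z', solII y' z' /\ 0 < y' c) -> 0 < y c),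
      (forall t, ~~ prob (src t) ->
         (exists y' z', solII y' z' /\ teff y' z' t < 0) -> teff y z t < 0) &
      (forall p, prob p ->
         (exists y' z', solII y' z' /\ peff y' z' p < 0) -> peff y z p < 0)].

End VASSMDP.

(* Both dichotomies are instances of Farkas' lemma.  Over the rationals,
   system (I) is a homogeneous system [A x >= 0].  For a row k of A (a
   counter row or a transition row) either some rational solution is
   strictly positive on row k, or [- row k] is a nonnegative combination of
   rows of A.  Reading off the coefficients of such a combination (counter
   rows give y, flow rows give z, transition rows the slack) and clearing
   denominators gives a solution of (II) that is strict on the constraint
   dual to k.  Maximality of x and of (y, z) then transfers strictness. *)

From HB Require Import structures.
From mathcomp Require Import all_boot all_order all_algebra.
From mathcomp Require Import ring lra.
Import Order.TTheory GRing.Theory Num.Theory.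
Set Implicit Arguments. Unset Strict Implicit. Unset Printing Implicit Defensive.
Local Open Scope ring_scope.

Section Farkas.
Variables (R : realFieldType) (D : finType).

Definition dotv (v x : D -> R) : R := \sum_i v i * x i.

Fixpoint incone (s : seq (D -> R)) (a : D -> R) : Prop :=
  if s is v :: s' then exists2 c, 0 <= c & incone s' (fun i => a i - c * v i)
  else forall i, a i = 0.

Fixpoint allge (s : seq (D -> R)) (x : D -> R) : Prop :=
  if s is v :: s' then 0 <= dotv v x /\ allge s' x else True.

Lemma incone_ext s a b : a =1 b -> incone s a -> incone s b.
Proof.
elim: s a b => [|v s IH] a b Hab /=; first by move=> H i; rewrite -Hab.
by case=> c c0 H; exists c => //; apply: IH H => i; rewrite Hab.
Qed.

Lemma dotvBr w y x k : dotv w (fun i => y i - k * x i) = dotv w y - k * dotv w x.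
Proof. by rewrite /dotv mulr_sumr -sumrB; apply: eq_bigr => i _; ring. Qed.

Lemma dotvBl w v y k : dotv (fun i => w i - k * v i) y = dotv w y - k * dotv v y.
Proof. by rewrite /dotv mulr_sumr -sumrB; apply: eq_bigr => i _; ring. Qed.

Lemma dotvNl v x : dotv (fun i => - v i) x = - dotv v x.
Proof. by rewrite /dotv -sumrN; apply: eq_bigr => i _; rewrite mulNr. Qed.

Lemma farkas_nil a : incone [::] a \/ exists x, dotv a x < 0.
Proof.
have [/forallP a0|] := boolP [forall i, a i == 0]; first by left => i; apply/eqP.
move=> /forallPn[i0 ai0]; right; exists (fun i => - a i).
rewrite /dotv (bigD1 i0) //=.
have pos_i0 : 0 < a i0 ^+ 2 by rewrite exprn_even_gt0 //= ai0 orbT.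
have nneg_rest : 0 <= \sum_(i | i != i0) a i ^+ 2 by apply: sumr_ge0 => i _; apply: sqr_ge0.
have -> : \sum_(i | i != i0) a i * - a i = - \sum_(i | i != i0) a i ^+ 2.
  by rewrite -sumrN; apply: eq_bigr => i _; rewrite mulrN expr2.
rewrite mulrN -expr2; lra.
Qed.

Section Elimination.
Variables (v x : D -> R).
Hypothesis vx_lt0 : dotv v x < 0.

Definition eliminate (w : D -> R) : D -> R :=
  fun i => w i - dotv w x / dotv v x * v i.

Lemma dotv_eliminate w y :
  dotv (eliminate w) y = dotv w (fun i => y i - dotv v y / dotv v x * x i).
Proof. by rewrite dotvBr dotvBl; ring. Qed.

Lemma incone_eliminate s b : allge s x -> incone (map eliminate s) b ->
  exists2 c, 0 <= c & incone s (fun i => b i - c * v i).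
Proof.
elim: s b => [|w s IH] b /=; first by move=> _ b0; exists 0 => // i; rewrite b0; ring.
move=> [wx_ge0 sx] [c c_ge0 Hb]; have [c' c'_ge0 H] := IH _ sx Hb.
have coef_le0 : dotv w x / dotv v x <= 0 by rewrite mulr_ge0_le0 // invr_le0 ltW.
exists (c' - c * (dotv w x / dotv v x)).
  by rewrite subr_ge0 (le_trans _ c'_ge0) // mulr_ge0_le0.
by exists c => //; apply: incone_ext H => i; rewrite /eliminate; ring.
Qed.

End Elimination.

(* Fourier-Motzkin: the first vector is eliminated by projecting the others
   along the hyperplane [dotv _ x = 0] of a certificate [x] for the rest. *)
Lemma farkas_seq s a : incone s a \/ exists x, allge s x /\ dotv a x < 0.
Proof.
move: {2}(size s) (erefl (size s)) => n; elim: n s a => [|n IHn] [|v s] a //=.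
  by move=> _; case: (farkas_nil a) => [|[x]]; [left|right; exists x].
move=> [size_s]; have [Ha|[x [sx ax_lt0]]] := IHn s a size_s.
  by left; exists 0 => //; apply: incone_ext Ha => i; ring.
have [vx_ge0|vx_lt0] := leP 0 (dotv v x); first by right; exists x.
have size_es : size (map (eliminate v x) s) = n by rewrite size_map.
have [Hc|[y [sy ay_lt0]]] := IHn _ (eliminate v x a) size_es.
- have [c c_ge0 H] := incone_eliminate vx_lt0 sx Hc.
  left; exists (dotv a x / dotv v x + c).
    by rewrite addr_ge0 // ltW // nmulr_rgt0 ?invr_lt0.
  by apply: incone_ext H => i; rewrite /eliminate; ring.
- right; exists (fun i => y i - dotv v y / dotv v x * x i); split.
  + split; first by rewrite dotvBr mulfVK ?lt_eqF // subrr.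
    elim: s {IHn sx size_s size_es} sy => [|w s IHs] //= [wy sy].
    by split; [rewrite -dotv_eliminate | exact: IHs].
  + by rewrite -dotv_eliminate.
Qed.

Lemma incone_map (X : eqType) (f : X -> D -> R) (r : seq X) a :
  uniq r -> incone (map f r) a ->
  exists2 lam : X -> R, forall l, 0 <= lam l & forall i, a i = \sum_(l <- r) lam l * f l i.
Proof.
elim: r a => [|l0 r IH] a /=; first by move=> _ a0; exists (fun=> 0) => // i; rewrite a0 big_nil.
move=> /andP[l0r r_uniq] [c c_ge0 Hc]; have [lam lam_ge0 Ha] := IH _ r_uniq Hc.
exists (fun l => if l == l0 then c else lam l) => [l|i]; first by case: ifP.
rewrite big_cons eqxx (eq_big_seq (fun l => lam l * f l i)); last first.
  by move=> l lr; case: eqP lr l0r => // ->->.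
by rewrite -Ha; ring.
Qed.

Lemma allge_map (X : eqType) (f : X -> D -> R) (r : seq X) x :
  allge (map f r) x -> forall l, l \in r -> 0 <= dotv (f l) x.
Proof.
elim: r => [|l0 r IH] //= [l0x rx] l; rewrite inE => /predU1P[-> //|]; exact: IH.
Qed.

Lemma farkas_strict (L : finType) (row : L -> D -> R) (k : L) :
  (exists x, (forall l, 0 <= dotv (row l) x) /\ 0 < dotv (row k) x) \/
  (exists mu : L -> R,
     [/\ forall l, 0 <= mu l, 0 < mu k & forall i, \sum_l mu l * row l i = 0]).
Proof.
have [Hc|[x [Hx kx]]] := farkas_seq (map row (index_enum L)) (fun i => - row k i).
  have [lam lam_ge0 Hk] := incone_map (index_enum_uniq L) Hc.
  right; exists (fun l => lam l + (l == k)%:R); split => [l||i].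
  - by rewrite addr_ge0.
  - by rewrite eqxx ltr_pwDr.
  under eq_bigr do rewrite mulrDl.
  rewrite big_split /= -Hk (bigD1 k) //= eqxx mul1r big1 ?addr0 ?addNr //.
  by move=> l /negbTE ->; rewrite mul0r.
left; exists x; split; last by rewrite -oppr_lt0 -dotvNl.
by move=> l; apply: allge_map Hx _ (mem_index_enum l).
Qed.

End Farkas.

Lemma int_multiple (D : finType) (f : D -> rat) :
  exists2 N : int, 0 < N & exists F : D -> int, forall i, (F i)%:~R = N%:~R * f i.
Proof.
exists (\prod_i denq (f i)); first by apply: prodr_gt0 => i _; apply: denq_gt0.
exists (fun i => numq (f i) * \prod_(j | j != i) denq (f j)) => i.
by rewrite [X in _ = X%:~R * _](bigD1 i) //= !intrM numqE; ring.
Qed.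

Lemma int_multiple_sum (I : finType) (X : I -> int) (N : int) (x : I -> rat) (b : pred I) :
  (forall i, (X i)%:~R = N%:~R * x i) ->
  (\sum_(i | b i) X i)%:~R = N%:~R * \sum_(i | b i) x i :> rat.
Proof. by move=> HX; rewrite rmorph_sum mulr_sumr; apply: eq_bigr => i _; exact: HX. Qed.

Lemma sum_indicator (I : finType) (a : I) (F : I -> rat) :
  \sum_i F i * (a == i)%:R = F a.
Proof.
rewrite (bigD1 a) //= eqxx mulr1 big1 ?addr0 // => i /negbTE.
by rewrite eq_sym => ->; rewrite mulr0.
Qed.

Lemma sum_cond_indicator (I : finType) (b : pred I) (F : I -> rat) :
  \sum_(i | b i) F i = \sum_i (b i)%:R * F i.
Proof. by rewrite big_mkcond; apply: eq_bigr => i _; case: (b i); rewrite ?mul1r ?mul0r. Qed.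

Section VASSMDPDuality.
Variables (d : nat) (Q T : finType) (prob : pred Q) (src tgt : T -> Q)
          (u : T -> 'I_d -> int) (P : T -> rat).

(* Constraint system (I) as a homogeneous system [0 <= dotv (row l) x]:
   one row per counter, per transition (x >= 0), two opposite rows per
   flow equation and per probability equation. *)
Definition row_label := (('I_d + T) + ((Q + Q) + (T + T)))%type.

Local Notation counter c := (inl (inl c)).
Local Notation transition t := (inl (inr t)).
Local Notation flow_out p := (inr (inl (inl p))).
Local Notation flow_in p := (inr (inl (inr p))).
Local Notation prob_le t := (inr (inr (inl t))).
Local Notation prob_ge t := (inr (inr (inr t))).

Definition flow_row (p : Q) (t' : T) : rat := (src t' == p)%:R - (tgt t' == p)%:R.

Definition prob_row (t t' : T) : rat :=
  if prob (src t) then (t' == t)%:R - P t * (src t' == src t)%:R else 0.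

Definition row (l : row_label) : T -> rat :=
  match l with
  | counter c => fun t' => (u t' c)%:~R
  | transition t => fun t' => (t' == t)%:R
  | flow_out p => flow_row p
  | flow_in p => fun t' => - flow_row p t'
  | prob_le t => prob_row t
  | prob_ge t => fun t' => - prob_row t t'
  end.

Lemma dotv_transition_row t x : dotv (row (transition t)) x = x t.
Proof.
rewrite /dotv (bigD1 t) //= eqxx mul1r big1 ?addr0 // => t' /negbTE ->.
by rewrite mul0r.
Qed.

Lemma dotv_flow_row p x :
  dotv (flow_row p) x = \sum_(t | src t == p) x t - \sum_(t | tgt t == p) x t.
Proof.
rewrite (sum_cond_indicator (fun t => src t == p)).
rewrite (sum_cond_indicator (fun t => tgt t == p)) -sumrB /dotv.
by apply: eq_bigr => t _; rewrite /flow_row; ring.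
Qed.

Lemma dotv_prob_row t x : prob (src t) ->
  dotv (prob_row t) x = x t - P t * \sum_(t' | src t' == src t) x t'.
Proof.
move=> pt; rewrite (sum_cond_indicator (fun t' => src t' == src t)) mulr_sumr.
rewrite -(dotv_transition_row t x) -sumrB.
by apply: eq_bigr => t' _; rewrite /prob_row pt; ring.
Qed.

Lemma solI_of_rat x : (forall l, 0 <= dotv (row l) x) ->
  exists2 N : int, 0 < N & exists X, [/\ solI prob src tgt u P X,
    forall t, (X t)%:~R = N%:~R * x t &
    forall c, (totaleff u X c)%:~R = N%:~R * dotv (row (counter c)) x].
Proof.
move=> x_sol; have [N N_gt0 [X HX]] := int_multiple x.
have N_gt0' : 0 < N%:~R :> rat by rewrite ltr0z.
have Htot c : (totaleff u X c)%:~R = N%:~R * dotv (row (counter c)) x.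
  rewrite /totaleff rmorph_sum /dotv mulr_sumr; apply: eq_bigr => t _ /=.
  by rewrite intrM HX; ring.
exists N => //; exists X; split => //; split.
- by move=> c; rewrite -(ler0z rat) Htot mulr_ge0 // ltW.
- by move=> t; rewrite -(ler0z rat) HX -(dotv_transition_row t) mulr_ge0 // ltW.
- move=> p; apply: (@intr_inj rat); rewrite !(int_multiple_sum _ HX).
  have := x_sol (flow_out p); have := x_sol (flow_in p).
  rewrite /= dotvNl dotv_flow_row => *.
  by congr (_ * _); lra.
- move=> t pt; rewrite (int_multiple_sum _ HX) HX.
  have := x_sol (prob_le t); have := x_sol (prob_ge t).
  rewrite /= dotvNl dotv_prob_row // => *.
  have -> : x t = P t * \sum_(t' | src t' == src t) x t' by lra.
  ring.
Qed.

Definition teffr (y : 'I_d -> rat) (z : Q -> rat) (t : T) : rat :=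
  z (tgt t) - z (src t) + \sum_i (u t i)%:~R * y i.

Definition peffr (y : 'I_d -> rat) (z : Q -> rat) (p : Q) : rat :=
  \sum_(t | src t == p) P t * teffr y z t.

(* Clearing denominators of a rational (y, z); shifting z by a constant,
   which does not change [teffr], makes the integer z nonnegative. *)
Lemma int_multiple_II y z : exists2 N : int, 0 < N & exists Y Z,
  [/\ forall c, (Y c)%:~R = N%:~R * y c, forall q, 0 <= Z q,
      forall t, (teff src tgt u Y Z t)%:~R = N%:~R * teffr y z t &
      forall p, peff src tgt u P Y Z p = N%:~R * peffr y z p].
Proof.
pose M : rat := \sum_q `|z q|.
pose f (i : 'I_d + Q) := match i with inl c => y c | inr q => z q + M end.
have [N N_gt0 [F HF]] := int_multiple f.
have N_gt0' : 0 < N%:~R :> rat by rewrite ltr0z.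
pose Y c := F (inl c); pose Z q := F (inr q).
have Hteff t : (teff src tgt u Y Z t)%:~R = N%:~R * teffr y z t.
  have Hs : (\sum_i u t i * Y i)%:~R = N%:~R * \sum_i (u t i)%:~R * y i :> rat.
    rewrite rmorph_sum mulr_sumr; apply: eq_bigr => i _.
    by rewrite /= intrM /Y HF /=; ring.
  by rewrite /teff intrD intrB Hs /Z !HF /= /teffr; ring.
exists N => //; exists Y, Z; split => [c|q|//|p].
- exact: HF (inl c).
- rewrite -(ler0z rat) /Z HF mulr_ge0 ?(ltW N_gt0') //=.
  have zq_le_M : `|z q| <= M by rewrite /M (bigD1 q) //= lerDl sumr_ge0.
  by rewrite -lerBlDr sub0r lerNnormlW.
- by rewrite /peff /peffr mulr_sumr; apply: eq_bigr => t _; rewrite Hteff; ring.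
Qed.

Lemma prob_row_nonprob t t' : ~~ prob (src t') -> prob_row t t' = 0.
Proof.
rewrite /prob_row; case pt: (prob (src t)) => // npt'.
have t't : t' != t by apply: contraNneq npt' => ->.
have st't : src t' != src t by apply: contraNneq npt' => ->.
by rewrite (negbTE t't) (negbTE st't) mulr0 subr0.
Qed.

(* For [p = src t] the sum is [P t - P t * 1]; otherwise every term vanishes. *)
Lemma prob_row_balanced t p : prob p -> \sum_(t' | src t' == p) P t' = 1 ->
  \sum_(t' | src t' == p) P t' * prob_row t t' = 0.
Proof.
move=> pp sumP1; rewrite /prob_row; case pt: (prob (src t)); last first.
  by rewrite big1 // => t' _; rewrite mulr0.
have [stp|stp] := eqVneq (src t) p; last first.
  apply: big1 => t' /eqP st'; have t't : t' != t.
    by apply: contraNneq stp => <-; apply/eqP.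
  by rewrite (negbTE t't) st' eq_sym (negbTE stp) mulr0 subr0 mulr0.
subst p; transitivity (\sum_(t' | src t' == src t) (P t' * (t' == t)%:R - P t * P t')).
  by apply: eq_bigr => t' /eqP ->; rewrite eqxx /=; ring.
rewrite sumrB -mulr_sumr sumP1 mulr1.
rewrite (bigD1 t) //= eqxx mulr1 big1 ?addr0 ?subrr // => t' /andP[_ /negbTE ->].
by rewrite mulr0.
Qed.

Section ConeCertificate.
Variable mu : row_label -> rat.
Hypotheses (mu_ge0 : forall l, 0 <= mu l)
           (mu_rows : forall t', \sum_l mu l * row l t' = 0).

Let y_mu c := mu (counter c).
Let z_mu q := mu (flow_in q) - mu (flow_out q).
Let s_mu t := mu (transition t).
Let prob_term t' := \sum_t (mu (prob_le t) - mu (prob_ge t)) * prob_row t t'.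

Lemma teffr_cone t' : teffr y_mu z_mu t' = - s_mu t' - prob_term t'.
Proof.
have := mu_rows t'; rewrite !big_sumType /=.
have -> : \sum_(c < d) mu (counter c) * (u t' c)%:~R = \sum_c (u t' c)%:~R * y_mu c.
  by apply: eq_bigr => c _; rewrite mulrC.
rewrite sum_indicator.
have -> : \sum_q mu (flow_out q) * flow_row q t' + \sum_q mu (flow_in q) * - flow_row q t'
          = z_mu (tgt t') - z_mu (src t').
  rewrite -big_split /=.
  transitivity (\sum_q (z_mu q * (tgt t' == q)%:R - z_mu q * (src t' == q)%:R)).
    by apply: eq_bigr => q _; rewrite /flow_row /z_mu !(eq_sym _ q); ring.
  by rewrite sumrB !sum_indicator.
have -> : \sum_t mu (prob_le t) * prob_row t t' + \sum_t mu (prob_ge t) * - prob_row t t'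
          = prob_term t'.
  by rewrite -big_split /=; apply: eq_bigr => t _; ring.
rewrite /teffr /s_mu; lra.
Qed.

Lemma peffr_cone p : prob p -> \sum_(t | src t == p) P t = 1 ->
  peffr y_mu z_mu p = - \sum_(t | src t == p) P t * s_mu t.
Proof.
move=> pp sumP1.
have prob_term_balanced : \sum_(t' | src t' == p) P t' * prob_term t' = 0.
  under eq_bigr do rewrite mulr_sumr.
  rewrite exchange_big /=; apply: big1 => t _.
  under eq_bigr do rewrite mulrCA.
  by rewrite -mulr_sumr prob_row_balanced // mulr0.
transitivity (\sum_(t | src t == p) (- (P t * s_mu t) - P t * prob_term t)).
  by apply: eq_bigr => t _; rewrite teffr_cone; ring.
by rewrite sumrB prob_term_balanced subr0 sumrN.
Qed.

Lemma solII_of_cone : is_vass_mdp prob src tgt u P -> exists Y Z,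
  [/\ solII prob src tgt u P Y Z,
      forall c, 0 < mu (counter c) -> 0 < Y c &
      forall t, 0 < mu (transition t) ->
        (~~ prob (src t) -> teff src tgt u Y Z t < 0) /\
        (prob (src t) -> peff src tgt u P Y Z (src t) < 0)].
Proof.
case=> _ _ _ P_gt0 sumP1.
have [N N_gt0 [Y [Z [HY Z_ge0 Hteff Hpeff]]]] := int_multiple_II y_mu z_mu.
have N_gt0' : 0 < N%:~R :> rat by rewrite ltr0z.
have teff_nonprob t : ~~ prob (src t) -> (teff src tgt u Y Z t)%:~R = - N%:~R * s_mu t.
  move=> npt; rewrite Hteff teffr_cone /prob_term.
  by rewrite big1 ?subr0 ?mulrN ?mulNr // => t' _; rewrite prob_row_nonprob ?mulr0.
have peff_prob p : prob p ->
    peff src tgt u P Y Z p = - N%:~R * \sum_(t | src t == p) P t * s_mu t.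
  by move=> pp; rewrite Hpeff peffr_cone ?sumP1 // mulrN mulNr.
have Ps_ge0 t : prob (src t) -> 0 <= P t * s_mu t.
  by move=> pt; rewrite mulr_ge0 ?mu_ge0 // ltW // P_gt0.
have sum_Ps_ge0 p : prob p -> 0 <= \sum_(t | src t == p) P t * s_mu t.
  by move=> pp; apply: sumr_ge0 => t /eqP stp; rewrite Ps_ge0 // stp.
exists Y, Z; split; [split => [c|//|t npt|p pp] | move=> c mu_c | move=> t mu_t; split].
- by rewrite -(ler0z rat) HY mulr_ge0 ?(ltW N_gt0') ?mu_ge0.
- by rewrite -(lerz0 rat) teff_nonprob // mulNr oppr_le0 mulr_ge0 ?(ltW N_gt0') ?mu_ge0.
- by rewrite peff_prob // mulNr oppr_le0 mulr_ge0 ?(ltW N_gt0') ?sum_Ps_ge0.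
- by rewrite -(ltr0z rat) HY mulr_gt0.
- by move=> npt; rewrite -(ltrz0 rat) teff_nonprob // mulNr oppr_lt0 mulr_gt0.
move=> pt; rewrite peff_prob // mulNr oppr_lt0 mulr_gt0 // (bigD1 t) //=.
have Ps_gt0 : 0 < P t * s_mu t by rewrite mulr_gt0 ?P_gt0.
have rest_ge0 : 0 <= \sum_(t' | (src t' == src t) && (t' != t)) P t' * s_mu t'.
  by apply: sumr_ge0 => t' /andP[/eqP st't _]; rewrite Ps_ge0 // st't.
lra.
Qed.

End ConeCertificate.

Lemma counter_alternative c : is_vass_mdp prob src tgt u P ->
  (exists X, solI prob src tgt u P X /\ 0 < totaleff u X c) \/
  (exists Y Z, solII prob src tgt u P Y Z /\ 0 < Y c).
Proof.
move=> mdp.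
have [[x [x_sol cx_gt0]]|[mu [mu_ge0 mu_c mu_rows]]] := farkas_strict row (counter c).
  have [N N_gt0 [X [X_sol _ HX]]] := solI_of_rat x_sol.
  by left; exists X; split; rewrite // -(ltr0z rat) HX mulr_gt0 ?ltr0z.
have [Y [Z [YZ_sol HY _]]] := solII_of_cone mu_ge0 mu_rows mdp.
by right; exists Y, Z; split; last exact: HY mu_c.
Qed.

Lemma transition_alternative t : is_vass_mdp prob src tgt u P ->
  (exists X, solI prob src tgt u P X /\ 0 < X t) \/
  (exists Y Z, [/\ solII prob src tgt u P Y Z,
     ~~ prob (src t) -> teff src tgt u Y Z t < 0 &
     prob (src t) -> peff src tgt u P Y Z (src t) < 0]).
Proof.
move=> mdp.
have [[x [x_sol tx_gt0]]|[mu [mu_ge0 mu_t mu_rows]]] := farkas_strict row (transition t).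
  have [N N_gt0 [X [X_sol HX _]]] := solI_of_rat x_sol.
  left; exists X; split; rewrite // -(ltr0z rat) HX mulr_gt0 ?ltr0z //.
  by rewrite -dotv_transition_row.
have [Y [Z [YZ_sol _ HYZ]]] := solII_of_cone mu_ge0 mu_rows mdp.
by right; exists Y, Z; have [] := HYZ t mu_t.
Qed.

End VASSMDPDuality.

Theorem lemma4p2 (d : nat) (Q T : finType) (prob : pred Q) (src tgt : T -> Q)
  (u : T -> 'I_d -> int) (P : T -> rat)
  (Hmdp : is_vass_mdp prob src tgt u P)
  (Hsc : strongly_connected src tgt)
  (x : T -> int) (y : 'I_d -> int) (z : Q -> int)
  (Hx : maximal_I prob src tgt u P x)
  (Hyz : maximal_II prob src tgt u P y z) :
  (forall c : 'I_d, 0 < y c \/ 0 < totaleff u x c) /\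
  (forall t : T,
     (~~ prob (src t) -> teff src tgt u y z t < 0 \/ 0 < x t) /\
     (prob (src t) -> peff src tgt u P y z (src t) < 0 \/ 0 < x t)).
Proof.
case: Hx => _ x_max_counter x_max_transition.
case: Hyz => _ y_max teff_max peff_max; split=> [c|t].
  have [[X [X_sol X_c]]|[Y [Z [YZ_sol Y_c]]]] := counter_alternative c Hmdp.
  - by right; apply: x_max_counter; exists X.
  - by left; apply: y_max; exists Y, Z.
have [[X [X_sol X_t]]|[Y [Z [YZ_sol teff_t peff_t]]]] := transition_alternative t Hmdp.
  by split=> _; right; apply: x_max_transition; exists X.
split=> pt; left; [apply: teff_max | apply: peff_max] => //; exists Y, Z.
  by split; last exact: teff_t.
by split; last exact: peff_t.
Qed.
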